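(* Let $\Sigma$ be a complete rational polyhedral fan in $\mathbb{R}^n$ with primitive ray generators $u_1,\ldots,u_k$, with base locus $Z\subset\mathbb{C}^k$ and group $G\subset(\mathbb{C}^* )^k$ of the Cox construction (see context). For $z\in\mathbb{C}^k\setminus Z$, let $\overline{G\cdot z}\subset\mathbb{P}^k$ denote the Zariski closure of $\{(1:y_1:\cdots:y_k)\mid (y_1,\ldots,y_k)\in G\cdot z\}$. Then the dimension and the degree of the projective variety $\overline{G\cdot z}$ depend only on which $(\mathbb{C}^* )^k$-orbit $z$ belongs to; equivalently, they depend only on the index set $\mathscr I=\{i\mid z_i\neq 0\}$.
   Context: $F=[u_1~\cdots~u_k]\in\mathbb{Z}^{n\times k}$. The base locus is $Z=V_{\mathbb{C}^k}(B)$ where $B\subset\mathbb{C}[x_1,\ldots,x_k]$ is generated by the monomials $\prod_{i:\rho_i\not\subset\sigma}x_i$, $\sigma$ ranging over the $n$-dimensional cones of $\Sigma$ ($\rho_i$ the ray generated by $u_i$). $G=\{g\in(\mathbb{C}^* )^k\mid \prod_{j}g_j^{F_{i,j}}=1,\ i=1,\ldots,n\}$ acts on $\mathbb{C}^k\setminus Z$ by coordinatewise multiplication, $g\cdot z=(g_1z_1,\ldots,g_kz_k)$. *)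

From mathcomp Require Import all_boot all_order all_algebra.
From mathcomp Require Import complex Rstruct.
Set Implicit Arguments.
Unset Strict Implicit.
Unset Printing Implicit Defensive.
Import Order.TTheory GRing.Theory Num.Theory.
Local Open Scope ring_scope.

Definition RR : rcfType := Rdefinitions.R.
Definition CC : numClosedFieldType := complex Rdefinitions.R.

Section Fan.
Variables (n k : nat) (u : 'I_k -> 'rV[int]_n).

Definition ureal (i : 'I_k) : 'rV[RR]_n := map_mx (fun a : int => a%:~R) (u i).

Definition in_cone (S : {set 'I_k}) (x : 'rV[RR]_n) : Prop :=
  exists c : 'I_k -> RR, [/\ forall i, 0 <= c i,
                             forall i, i \notin S -> c i = 0
                           & x = \sum_i c i *: ureal i].

Definition dotR (m x : 'rV[RR]_n) : RR := \sum_j m ord0 j * x ord0 j.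

Definition is_face_of (tau sigma : 'rV[RR]_n -> Prop) : Prop :=
  exists m : 'rV[RR]_n, (forall y, sigma y -> 0 <= dotR m y) /\
                        (forall y, tau y <-> (sigma y /\ dotR m y = 0)).

Definition primitive_vec (v : 'rV[int]_n) : Prop :=
  v != 0 /\ forall d : int, (forall j, (d %| v ord0 j)%Z) -> d = 1 \/ d = -1.

(* Sigma (a finite set of cones, each cone sigma_S encoded by the set S of
   indices of the rays it contains) is a complete rational polyhedral fan
   in R^n whose rays are exactly rho_i = cone(u_i), with u_i primitive. *)
Definition is_complete_fan (Sigma : {set {set 'I_k}}) : Prop :=
  (forall i, primitive_vec (u i)) /\
  (forall i, [set i] \in Sigma) /\
  (forall i j, in_cone [set j] (ureal i) -> i = j) /\
  (forall S, S \in Sigma -> forall i, i \in S <-> in_cone S (ureal i)) /\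
  (forall S, S \in Sigma -> forall x, in_cone S x -> in_cone S (- x) -> x = 0) /\
  (forall S, S \in Sigma -> forall tau, is_face_of tau (in_cone S) ->
        exists2 T, T \in Sigma & forall x, tau x <-> in_cone T x) /\
  (forall S T, S \in Sigma -> T \in Sigma ->
        is_face_of (fun x => in_cone S x /\ in_cone T x) (in_cone S) /\
        is_face_of (fun x => in_cone S x /\ in_cone T x) (in_cone T)) /\
  (forall x, exists2 S, S \in Sigma & in_cone S x).

Definition full_dim (S : {set 'I_k}) : bool :=
  \rank (\matrix_(i < k, j < n) (if i \in S then ureal i ord0 j else 0)) == n.

(* z lies in the base locus Z = V(B), B generated by prod_{rho_i not in sigma} x_i,
   sigma ranging over the n-dimensional cones of Sigma. *)
Definition in_base_locus (Sigma : {set {set 'I_k}}) (z : 'I_k -> CC) : Prop :=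
  forall S, S \in Sigma -> full_dim S -> \prod_(i | i \notin S) z i = 0.

Definition in_G (g : 'I_k -> CC) : Prop :=
  (forall j, g j != 0) /\ forall i : 'I_n, \prod_(j < k) g j ^ (u j ord0 i) = 1.

Definition in_orbit (z y : 'I_k -> CC) : Prop :=
  exists g, in_G g /\ forall i, y i = g i * z i.

End Fan.

(* (1 : y_1 : ... : y_k), as a representative in C^{k+1} *)
Definition hom_pt (k : nat) (y : 'I_k -> CC) : 'I_k.+1 -> CC :=
  fun i => if unlift ord0 i is Some j then y j else 1.

Section Hilbert.
Variable (m : nat).

Definition mon_eval (d : nat) (alpha : {ffun 'I_m -> 'I_d.+1}) (p : 'I_m -> CC) : CC :=
  if (\sum_i (alpha i : nat) == d)%N then \prod_i p i ^+ alpha i else 0.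

Definition eval_mx (d N : nat) (P : 'I_N -> 'I_m -> CC)
  : 'M[CC]_(N, #|{: {ffun 'I_m -> 'I_d.+1}}|) :=
  \matrix_(r, c) mon_eval (enum_val c) (P r).

(* r = value at d of the Hilbert function of the Zariski closure in P^{m-1}
   of the set of points X (given by representatives in C^m), i.e.
   r = dim C[x]_d / I_d where I_d = degree-d forms vanishing on X. *)
Definition is_hilbert_value (X : ('I_m -> CC) -> Prop) (d r : nat) : Prop :=
  (exists N (P : 'I_N -> 'I_m -> CC), (forall j, X (P j)) /\ \rank (eval_mx d P) = r)
  /\ (forall N (P : 'I_N -> 'I_m -> CC), (forall j, X (P j)) -> (\rank (eval_mx d P) <= r)%N).

(* the projective variety (closure of X) has dimension D and degree e:
   its Hilbert polynomial is (e / D!) d^D + lower order terms. *)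
Definition has_dim_deg (X : ('I_m -> CC) -> Prop) (D e : nat) : Prop :=
  exists h : nat -> nat, (forall d, is_hilbert_value X d (h d)) /\
    exists q : {poly rat}, (size q <= D)%N /\
      exists d0, forall d, (d0 <= d)%N ->
        (h d)%:R = (e%:R / (D`!)%:R) * (d%:R ^+ D) + q.[d%:R] :> rat.

End Hilbert.

Definition orbit_pts (n k : nat) (u : 'I_k -> 'rV[int]_n) (z : 'I_k -> CC)
  : ('I_k.+1 -> CC) -> Prop :=
  fun p => exists y, in_orbit u z y /\ p = hom_pt y.

From Pilot Require Import Defs.
From mathcomp Require Import all_boot all_order all_algebra.
From mathcomp Require Import complex Rstruct.
From Stdlib Require Import FunctionalExtensionality.
Set Implicit Arguments.
Unset Strict Implicit.
Unset Printing Implicit Defensive.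
Import Order.TTheory GRing.Theory Num.Theory.
Local Open Scope ring_scope.

(* Multiplication by t in the torus (C^* )^k is the restriction of the diagonal
   projective automorphism diag(1, t) of P^k, and it commutes with G, so it maps
   the points of G.z onto those of G.(tz).  A diagonal automorphism multiplies
   each degree-d monomial by a nonzero constant, so evaluation matrices of
   monomials only change by an invertible diagonal right factor: the Hilbert
   functions, hence dimension and degree, agree.  Points with the same support
   differ by a torus element. *)

Section DiagonalScaling.
Variable m : nat.
Implicit Types w p : 'I_m -> CC.

Definition scale_pt w p : 'I_m -> CC := fun i => w i * p i.

Definition inv_pt w : 'I_m -> CC := fun i => (w i)^-1.

Lemma inv_pt_neq0 w : (forall i, w i != 0) -> forall i, inv_pt w i != 0.
Proof. by move=> wn i; rewrite invr_neq0. Qed.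

Lemma scale_ptK w : (forall i, w i != 0) -> cancel (scale_pt w) (scale_pt (inv_pt w)).
Proof. by move=> wn p; apply: functional_extensionality => i; rewrite /scale_pt mulKf. Qed.

Lemma scale_ptVK w : (forall i, w i != 0) -> cancel (scale_pt (inv_pt w)) (scale_pt w).
Proof. by move=> wn p; apply: functional_extensionality => i; rewrite /scale_pt mulVKf. Qed.

Lemma mon_eval_scale d (alpha : {ffun 'I_m -> 'I_d.+1}) w p :
  mon_eval alpha (scale_pt w p) = (\prod_i w i ^+ alpha i) * mon_eval alpha p.
Proof.
rewrite /mon_eval; case: ifP => _; last by rewrite mulr0.
by rewrite -big_split; apply: eq_bigr => i _; rewrite exprMn.
Qed.

Lemma eval_mx_scale d N (P : 'I_N -> 'I_m -> CC) w :
  eval_mx d (fun r => scale_pt w (P r)) =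
  eval_mx d P *m diag_mx (\row_(c < #|{: {ffun 'I_m -> 'I_d.+1}}|) \prod_i w i ^+ (enum_val c i : nat)).
Proof.
by apply/matrixP => r c; rewrite mul_mx_diag !mxE mon_eval_scale mulrC.
Qed.

Lemma rank_eval_mx_scale d N (P : 'I_N -> 'I_m -> CC) w :
  (forall i, w i != 0) -> \rank (eval_mx d (fun r => scale_pt w (P r))) = \rank (eval_mx d P).
Proof.
move=> wn; rewrite eval_mx_scale; apply: mxrankMfree.
rewrite row_free_unit unitmxE det_diag unitfE.
by apply/prodf_neq0 => c _; rewrite mxE; apply/prodf_neq0 => i _; apply: expf_neq0.
Qed.

Section Transport.
Variables (X X' : ('I_m -> CC) -> Prop) (w : 'I_m -> CC).
Hypothesis w_neq0 : forall i, w i != 0.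
Hypothesis X'E : forall p, X' p <-> X (scale_pt (inv_pt w) p).

Lemma is_hilbert_value_scale d r : is_hilbert_value X d r -> is_hilbert_value X' d r.
Proof.
move=> [[N [P [XP rkP]]] rk_le]; split.
  exists N, (fun j => scale_pt w (P j)); split; last by rewrite rank_eval_mx_scale.
  by move=> j; apply/X'E; rewrite scale_ptK.
move=> N' P' X'P'.
have -> : P' = (fun j => scale_pt w (scale_pt (inv_pt w) (P' j))).
  by apply: functional_extensionality => j; rewrite scale_ptVK.
by rewrite rank_eval_mx_scale //; apply: rk_le => j; apply/X'E.
Qed.

Lemma has_dim_deg_scale D e : has_dim_deg X D e -> has_dim_deg X' D e.
Proof.
move=> [h [hX hpoly]]; exists h; split=> // d.
exact: is_hilbert_value_scale.
Qed.

End Transport.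

Lemma has_dim_deg_scaleE (X X' : ('I_m -> CC) -> Prop) w D e :
  (forall i, w i != 0) -> (forall p, X' p <-> X (scale_pt (inv_pt w) p)) ->
  has_dim_deg X' D e <-> has_dim_deg X D e.
Proof.
move=> wn X'E; split; last exact: has_dim_deg_scale.
have inv_ptK : inv_pt (inv_pt w) = w.
  by apply: functional_extensionality => i; rewrite /inv_pt invrK.
apply: (has_dim_deg_scale (inv_pt_neq0 wn)) => p.
by rewrite inv_ptK X'E scale_ptK.
Qed.

End DiagonalScaling.

Lemma hom_pt_neq0 k (t : 'I_k -> CC) : (forall i, t i != 0) -> forall i, hom_pt t i != 0.
Proof. by move=> tn i; rewrite /hom_pt; case: unlift => [j|]; rewrite ?oner_neq0. Qed.

Lemma hom_pt_scale k (t y : 'I_k -> CC) :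
  hom_pt (scale_pt t y) = scale_pt (hom_pt t) (hom_pt y).
Proof.
by apply: functional_extensionality => i; rewrite /scale_pt /hom_pt; case: unlift; rewrite ?mulr1.
Qed.

(* Qualified: the imported fingraph library also exports an [in_orbit]. *)
Lemma in_orbit_scale n k (u : 'I_k -> 'rV[int]_n) (t z y : 'I_k -> CC) :
  Defs.in_orbit u z y -> Defs.in_orbit u (scale_pt t z) (scale_pt t y).
Proof. by move=> [g [Gg yE]]; exists g; split=> // i; rewrite /scale_pt yE mulrCA. Qed.

Lemma orbit_pts_scale n k (u : 'I_k -> 'rV[int]_n) (t z : 'I_k -> CC) :
  (forall i, t i != 0) -> forall p,
  orbit_pts u (scale_pt t z) p <-> orbit_pts u z (scale_pt (inv_pt (hom_pt t)) p).
Proof.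
move=> tn p; have htn := hom_pt_neq0 tn; split.
  move=> [y [orb_y ->]]; exists (scale_pt (inv_pt t) y); split.
    by rewrite -[z](scale_ptK tn); apply: in_orbit_scale.
  by apply: (can_inj (scale_ptK htn)); rewrite scale_ptVK // -hom_pt_scale scale_ptVK.
move=> [y [orb_y pE]]; exists (scale_pt t y); split; first exact: in_orbit_scale.
by rewrite hom_pt_scale -pE scale_ptVK.
Qed.

Lemma has_dim_deg_orbit_scale n k (u : 'I_k -> 'rV[int]_n) (t z : 'I_k -> CC) D e :
  (forall i, t i != 0) ->
  has_dim_deg (orbit_pts u (scale_pt t z)) D e <-> has_dim_deg (orbit_pts u z) D e.
Proof. by move=> tn; apply: has_dim_deg_scaleE (hom_pt_neq0 tn) (orbit_pts_scale u z tn). Qed.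

Lemma same_support_scale k (z z' : 'I_k -> CC) :
  (forall i, (z i != 0) = (z' i != 0)) ->
  exists2 t, forall i, t i != 0 & z' = scale_pt t z.
Proof.
move=> supp; exists (fun i => if z i != 0 then z' i / z i else 1).
  move=> i; case: ifPn => [nz|_]; last exact: oner_neq0.
  by rewrite mulf_neq0 ?invr_neq0 // -supp.
apply: functional_extensionality => i; rewrite /scale_pt.
case: ifPn => [nz|]; first by rewrite mulfVK.
rewrite negbK => /eqP z0; move: (supp i); rewrite z0 eqxx => /esym/negbFE/eqP->.
by rewrite mulr0.
Qed.

Theorem corollary3p3 (n k : nat) (u : 'I_k -> 'rV[int]_n) (Sigma : {set {set 'I_k}}) :
  is_complete_fan u Sigma ->
  (forall z z' : 'I_k -> CC,
     ~ in_base_locus u Sigma z -> ~ in_base_locus u Sigma z' ->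
     (exists t : 'I_k -> CC, (forall i, t i != 0) /\ forall i, z' i = t i * z i) ->
     forall D e : nat,
       has_dim_deg (orbit_pts u z) D e <-> has_dim_deg (orbit_pts u z') D e)
  /\
  (forall z z' : 'I_k -> CC,
     ~ in_base_locus u Sigma z -> ~ in_base_locus u Sigma z' ->
     (forall i, (z i != 0) = (z' i != 0)) ->
     forall D e : nat,
       has_dim_deg (orbit_pts u z) D e <-> has_dim_deg (orbit_pts u z') D e).
Proof.
move=> _; split=> z z' _ _.
  move=> [t [tn z'E]] D e.
  have -> : z' = scale_pt t z by apply: functional_extensionality.
  by rewrite has_dim_deg_orbit_scale.
move=> /same_support_scale [t tn ->] D e.
by rewrite has_dim_deg_orbit_scale.
Qed.
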